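(* Let $\Omega\subset\mathbb{C}^n$ be a bounded domain, let $\mathcal R$ and $\mathcal R'$ be quasi-free Hilbert modules of rank $m$, $1\le m<\infty$, over $A(\Omega)$ with generating sets $\{f_i\}_{i=1}^m$ and $\{g_i\}_{i=1}^m$, and let $\delta=\delta(\mathcal R,\mathcal R')$ with Hilbert space adjoint $\delta^*:\mathcal R'\to\mathcal R$. Then the domain of $\delta^*$ contains the finite linear span of $\{k'^i_z:z\in\Omega,1\le i\le m\}$, and for $z\in\Omega$ and $1\le i\le m$, \[\delta^*k'^i_z=\sum_j X_{ij}(z)\,k^j_z.\]
   Context: $A(\Omega)$ is the closure, in the supremum norm on $\Omega$, of the set of functions holomorphic on some neighbourhood of $\overline\Omega$; $\ell^2_m$ is the $m$-dimensional Hilbert space. A quasi-free Hilbert module of rank $m$ over $A(\Omega)$ is a Hilbert space $\mathcal R$ obtained as the completion of $A(\Omega)\otimes\ell^2_m$ (regarded as $\ell^2_m$-valued holomorphic functions on $\Omega$) with respect to an inner product such that: (1) for each $z\in\Omega$ evaluation at $z$ is bounded, with norm locally uniformly bounded in $z$; (2) $\|\varphi F\|_{\mathcal R}\le\|\varphi\|_{A(\Omega)}\|F\|_{\mathcal R}$; (3) if $(F_i)$ is Cauchy in $\mathcal R$-norm, then $F_i(z)\to0$ for all $z$ iff $\|F_i\|_{\mathcal R}\to0$. A generating set is $\{f_1,\dots,f_m\}\subset\mathcal R$ whose $A(\Omega)$-multiples span a dense subspace and such that its localizations at each $z$ form a basis (so $\{f_i(z)\}$ is a basis of $\ell^2_m$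 for each $z$). $\delta(\mathcal R,\mathcal R')$ is the closed, densely defined module transformation whose graph is the closure in $\mathcal R\oplus\mathcal R'$ of the span of $\{\varphi f_i\oplus\varphi g_i:\varphi\in A(\Omega),1\le i\le m\}$. The dual sets of kernel functions are the vectors $k^i_z\in\mathcal R$ and $k'^i_z\in\mathcal R'$ determined by $\langle k,k^i_z\rangle_{\mathcal R}=\langle k(z),f_i(z)\rangle_{\ell^2_m}$ for all $k\in\mathcal R$ and $\langle h,k'^i_z\rangle_{\mathcal R'}=\langle h(z),g_i(z)\rangle_{\ell^2_m}$ for all $h\in\mathcal R'$. For $z\in\Omega$, $(X_{ij}(z))_{i,j=1}^m$ is the matrix satisfying $\langle\sum_jX_{ij}(z)f_j(z),f_\ell(z)\rangle_{\ell^2_m}=\langle g_i(z),g_\ell(z)\rangle_{\ell^2_m}$ for $1\le i,\ell\le m$. *)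

From mathcomp Require Import all_boot all_algebra.
From mathcomp.real_closed Require Import complex.
From mathcomp Require Import reals.
Set Implicit Arguments. Unset Strict Implicit. Unset Printing Implicit Defensive.
Import GRing.Theory Num.Theory.
Local Open Scope ring_scope.

Section Defs.
Variables (R : realType) (n m : nat).
Local Notation C := R[i].
Local Notation pt := 'rV[C]_n.
(* l^2_m-valued functions on (a superset of) Omega *)
Local Notation fn := (pt -> 'rV[C]_m).

Definition sqn k (v : 'rV[C]_k) : C := \sum_i `|v 0 i| ^+ 2.
Definition dotl2 k (a b : 'rV[C]_k) : C := \sum_i a 0 i * (b 0 i)^*.

Definition openC (U : pt -> Prop) : Prop :=
  forall z, U z -> exists e : C, 0 < e /\ forall w, sqn (w - z) < e -> U w.
Definition closureC (Om : pt -> Prop) (w : pt) : Prop :=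
  forall e : C, 0 < e -> exists z, Om z /\ sqn (w - z) < e.
Definition connectedC (Om : pt -> Prop) : Prop :=
  forall A B : pt -> Prop, openC A -> openC B ->
    (forall z, Om z -> A z \/ B z) -> (forall z, Om z -> A z -> B z -> False) ->
    (forall z, Om z -> ~ A z) \/ (forall z, Om z -> ~ B z).
Definition boundedC (Om : pt -> Prop) : Prop :=
  exists M : C, forall z, Om z -> sqn z <= M.
Definition bounded_domain (Om : pt -> Prop) : Prop :=
  (exists z, Om z) /\ openC Om /\ connectedC Om /\ boundedC Om.

Definition holomorphic_on (U : pt -> Prop) (psi : pt -> C) : Prop :=
  forall z, U z -> exists a : pt, forall e : C, 0 < e -> exists d : C, 0 < d /\
    forall w, sqn (w - z) < d ->
      `|psi w - psi z - \sum_k a 0 k * (w 0 k - z 0 k)| ^+ 2 <= e * sqn (w - z).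

(* A(Omega): sup-norm (on Omega) closure of functions holomorphic on some
   neighbourhood of the closure of Omega *)
Definition inA (Om : pt -> Prop) (phi : pt -> C) : Prop :=
  forall e : C, 0 < e -> exists (U : pt -> Prop) (psi : pt -> C),
    openC U /\ (forall w, closureC Om w -> U w) /\ holomorphic_on U psi /\
    forall z, Om z -> `|phi z - psi z| ^+ 2 <= e.

(* A(Omega) (x) l^2_m, as l^2_m-valued functions *)
Definition in_tensor (Om : pt -> Prop) (F : fn) : Prop :=
  forall k, inA Om (fun z => F z 0 k).

Definition fsub (F G : fn) : fn := fun z => F z - G z.

Definition cauchy_seq (ip : fn -> fn -> C) (u : nat -> fn) : Prop :=
  forall e : C, 0 < e -> exists N, forall k l, (N <= k)%N -> (N <= l)%N ->
    ip (fsub (u k) (u l)) (fsub (u k) (u l)) < e.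

(* H is a Hilbert space of functions (identified when they agree on Omega) *)
Definition hilbert_space (Om : pt -> Prop) (H : fn -> Prop) (ip : fn -> fn -> C) : Prop :=
  H (fun _ => 0) /\
  (forall (a : C) F G, H F -> H G -> H (fun z => a *: F z + G z)) /\
  (forall F G, H F -> H G -> ip G F = (ip F G)^*) /\
  (forall (a : C) F G K, H F -> H G -> H K ->
     ip (fun z => a *: F z + G z) K = a * ip F K + ip G K) /\
  (forall F, H F -> 0 <= ip F F) /\
  (forall F, H F -> ip F F = 0 -> forall z, Om z -> F z = 0) /\
  (forall u : nat -> fn, (forall k, H (u k)) -> cauchy_seq ip u ->
     exists F, H F /\ forall e : C, 0 < e -> exists N, forall k, (N <= k)%N ->
       ip (fsub (u k) F) (fsub (u k) F) < e).

Definition quasi_free (Om : pt -> Prop) (H : fn -> Prop) (ip : fn -> fn -> C) : Prop :=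
  hilbert_space Om H ip /\
  (* completion of A(Omega) (x) l^2_m *)
  (forall F, in_tensor Om F -> H F) /\
  (forall F, H F -> forall e : C, 0 < e -> exists G, in_tensor Om G /\
     ip (fsub F G) (fsub F G) < e) /\
  (* (1) bounded evaluations, locally uniformly *)
  (forall z0, Om z0 -> exists r c : C, 0 < r /\ forall z, Om z -> sqn (z - z0) < r ->
     forall F, H F -> sqn (F z) <= c * ip F F) /\
  (* (2) contractive module action *)
  (forall phi, inA Om phi -> forall F, H F ->
     H (fun z => phi z *: F z) /\
     forall c : C, 0 <= c -> (forall z, Om z -> `|phi z| <= c) ->
       ip (fun z => phi z *: F z) (fun z => phi z *: F z) <= c ^+ 2 * ip F F) /\
  (forall u : nat -> fn, (forall k, in_tensor Om (u k)) -> cauchy_seq ip u ->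
     ((forall z, Om z -> forall e : C, 0 < e -> exists N, forall k, (N <= k)%N ->
          sqn (u k z) < e) <->
      (forall e : C, 0 < e -> exists N, forall k, (N <= k)%N -> ip (u k) (u k) < e))).

(* (x, y) lies in the linear span of {phi f_i (+) phi g_i : phi in A(Omega), i} *)
Definition modspan (Om : pt -> Prop) (f g : 'I_m -> fn) (x y : fn) : Prop :=
  exists N (c : 'I_N -> C) (phi : 'I_N -> pt -> C) (idx : 'I_N -> 'I_m),
    (forall k, inA Om (phi k)) /\
    x = (fun z => \sum_k (c k * phi k z) *: f (idx k) z) /\
    y = (fun z => \sum_k (c k * phi k z) *: g (idx k) z).

Definition locmx (f : 'I_m -> fn) (z : pt) : 'M[C]_m := \matrix_(i, j) f i z 0 j.

Definition generating_set (Om : pt -> Prop) (H : fn -> Prop) (ip : fn -> fn -> C)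
  (f : 'I_m -> fn) : Prop :=
  (forall i, H (f i)) /\
  (forall F, H F -> forall e : C, 0 < e -> exists G, modspan Om f f G G /\
     ip (fsub F G) (fsub F G) < e) /\
  (forall z, Om z -> row_free (locmx f z) && row_full (locmx f z)).

(* graph of delta(R, R'): closure in R (+) R' of the span above *)
Definition delta_graph (Om : pt -> Prop) (H H' : fn -> Prop) (ip ip' : fn -> fn -> C)
  (f g : 'I_m -> fn) (x y : fn) : Prop :=
  H x /\ H' y /\ forall e : C, 0 < e -> exists a b, modspan Om f g a b /\
    ip (fsub x a) (fsub x a) + ip' (fsub y b) (fsub y b) < e.

Definition kernel_functions (Om : pt -> Prop) (H : fn -> Prop) (ip : fn -> fn -> C)
  (f : 'I_m -> fn) (k : 'I_m -> pt -> fn) : Prop :=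
  forall i z, Om z -> H (k i z) /\ forall F, H F -> ip F (k i z) = dotl2 (F z) (f i z).

(* h is in dom(delta^* ) and delta^* h = y *)
Definition adjoint_value (Om : pt -> Prop) (H H' : fn -> Prop) (ip ip' : fn -> fn -> C)
  (f g : 'I_m -> fn) (h y : fn) : Prop :=
  H' h /\ H y /\ forall x u, delta_graph Om H H' ip ip' f g x u -> ip' u h = ip x y.

Definition in_adjoint_domain (Om : pt -> Prop) (H H' : fn -> Prop) (ip ip' : fn -> fn -> C)
  (f g : 'I_m -> fn) (h : fn) : Prop :=
  exists y, adjoint_value Om H H' ip ip' f g h y.

End Defs.

(* For (x, u) in the graph of delta and z in Omega, the pointwise identity
   <u(z), g_i(z)> = <x(z), sum_j X_ij(z) f_j(z)> holds on the A(Omega)-span of the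
   pairs (f_l, g_l) by the defining property of X, and it survives passing to the
   graph closure because evaluation at z is bounded on quasi-free modules.  The
   reproducing property turns its two sides into <u, k'^i_z> and
   <x, sum_j X_ij(z) k^j_z>; the span statement follows by linearity. *)

From mathcomp Require Import all_boot all_algebra.
From mathcomp.real_closed Require Import complex.
From mathcomp Require Import reals order.
From Stdlib Require Import FunctionalExtensionality.
Set Implicit Arguments. Unset Strict Implicit. Unset Printing Implicit Defensive.
Import Order.POrderTheory GRing.Theory Num.Theory.
Local Open Scope ring_scope.

Section Dotl2.
Variable R : realType.
Local Notation C := R[i].
Variable k : nat.
Implicit Types (a b t v : 'rV[C]_k).

Lemma dotl2_suml N (d : 'I_N -> C) (v : 'I_N -> 'rV[C]_k) t :
  dotl2 (\sum_q d q *: v q) t = \sum_q d q * dotl2 (v q) t.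
Proof.
rewrite /dotl2; under eq_bigr => i _ do rewrite summxE mulr_suml.
rewrite exchange_big; apply: eq_bigr => q _; rewrite mulr_sumr.
by apply: eq_bigr => i _; rewrite mxE mulrA.
Qed.

Lemma dotl2C a b : dotl2 a b = (dotl2 b a)^*.
Proof.
rewrite /dotl2 rmorph_sum; apply: eq_bigr => i _.
by rewrite rmorphM /= conjCK mulrC.
Qed.

Lemma dotl2_sumr N (d : 'I_N -> C) (v : 'I_N -> 'rV[C]_k) t :
  dotl2 t (\sum_q d q *: v q) = \sum_q (d q)^* * dotl2 t (v q).
Proof.
rewrite dotl2C dotl2_suml rmorph_sum; apply: eq_bigr => q _.
by rewrite rmorphM /= -dotl2C.
Qed.

Lemma dotl2Bl a b t : dotl2 (a - b) t = dotl2 a t - dotl2 b t.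
Proof. by rewrite /dotl2 -sumrB; apply: eq_bigr => i _; rewrite !mxE mulrBl. Qed.

Lemma sqn_ge0 v : 0 <= sqn v.
Proof. by apply: sumr_ge0 => i _; apply: exprn_ge0. Qed.

Lemma coord_le_sqn v i : `|v 0 i| ^+ 2 <= sqn v.
Proof. by rewrite /sqn (bigD1 i) //= lerDl sumr_ge0 // => j _; apply: exprn_ge0. Qed.

Lemma dotl2_small t (eps : C) : 0 < eps ->
  exists2 d : C, 0 < d & forall v, sqn v <= d -> `|dotl2 v t| <= eps.
Proof.
move=> eps_gt0; set T := \sum_i `|t 0 i|.
have T_ge0 : 0 <= T by apply: sumr_ge0.
set eta := eps / (T + 1).
have eta_gt0 : 0 < eta by rewrite divr_gt0 // ltr_wpDl.
exists (eta ^+ 2) => [|v v_small]; first exact: exprn_gt0.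
have coord_le i : `|v 0 i| <= eta.
  rewrite -ler_sqr ?nnegrE ?normr_ge0 ?(ltW eta_gt0) //.
  exact: le_trans (coord_le_sqn v i) v_small.
apply: le_trans (ler_norm_sum _ _ _) _.
apply: (@le_trans _ _ (eta * T)).
  rewrite /T mulr_sumr; apply: ler_sum => i _.
  by rewrite normrM norm_conjC ler_wpM2r.
by rewrite /eta mulrAC ler_pdivrMr ?ltr_wpDl // ler_wpM2l ?(ltW eps_gt0) // lerDl.
Qed.

End Dotl2.

Lemma normr_small_eq0 (R : numFieldType) (x : R) :
  (forall e, 0 < e -> `|x| <= e) -> x = 0.
Proof.
move=> x_small; apply/eqP; apply: contraT => x_neq0.
have x_gt0 : 0 < `|x| by rewrite normr_gt0.
have := x_small (`|x| / 2%:R) (divr_gt0 x_gt0 (ltr0Sn _ _)).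
by rewrite ler_pdivlMr ?ltr0Sn // mulr_natr mulr2n gerDl (lt_geF x_gt0).
Qed.

Section HilbertSpace.
Variables (R : realType) (n m : nat).
Local Notation C := R[i].
Local Notation fn := ('rV[C]_n -> 'rV[C]_m).
Variables (Om : 'rV[C]_n -> Prop) (H : fn -> Prop) (ip : fn -> fn -> C).
Hypothesis hs : hilbert_space Om H ip.

Lemma sum_fun0 (c : 'I_0 -> C) (F : 'I_0 -> fn) :
  (fun w => \sum_q c q *: F q w) = (fun _ => 0).
Proof. by apply: functional_extensionality => w; rewrite big_ord0. Qed.

Lemma sum_fun_recr N (c : 'I_N.+1 -> C) (F : 'I_N.+1 -> fn) :
  (fun w => \sum_q c q *: F q w) =
  (fun w => c ord_max *: F ord_max w +
     \sum_(q < N) c (widen_ord (leqnSn N) q) *: F (widen_ord (leqnSn N) q) w).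
Proof. by apply: functional_extensionality => w; rewrite big_ord_recr addrC. Qed.

Lemma hilbert_space_sum N (c : 'I_N -> C) (F : 'I_N -> fn) :
  (forall q, H (F q)) -> H (fun w => \sum_q c q *: F q w).
Proof.
have [H0 [HD _]] := hs.
elim: N c F => [|N IH] c F HF; first by rewrite sum_fun0.
by rewrite sum_fun_recr; apply: HD => //; apply: IH.
Qed.

Lemma hilbert_space_sub F G : H F -> H G -> H (fsub F G).
Proof.
have [_ [HD _]] := hs; move=> HF HG.
have -> : fsub F G = (fun z => (-1) *: G z + F z).
  by apply: functional_extensionality => z; rewrite scaleN1r addrC.
exact: HD.
Qed.

Lemma ip0l K : H K -> ip (fun _ => 0) K = 0.
Proof.
have [H0 [_ [_ [ipDl _]]]] := hs; move=> HK.
have := ipDl (-1) (fun _ => 0) (fun _ => 0) K H0 H0 HK.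
have -> : (fun _ : 'rV[C]_n => (-1) *: (0 : 'rV[C]_m) + 0) = (fun _ => 0).
  by apply: functional_extensionality => z; rewrite scaler0 addr0.
by rewrite mulN1r addNr.
Qed.

Lemma ip_suml N (c : 'I_N -> C) (F : 'I_N -> fn) K :
  (forall q, H (F q)) -> H K ->
  ip (fun w => \sum_q c q *: F q w) K = \sum_q c q * ip (F q) K.
Proof.
have [_ [_ [_ [ipDl _]]]] := hs.
elim: N c F => [|N IH] c F HF HK; first by rewrite sum_fun0 ip0l // big_ord0.
rewrite sum_fun_recr ipDl //; last exact: hilbert_space_sum.
by rewrite IH // [RHS]big_ord_recr addrC.
Qed.

Lemma ip_sumr N (c : 'I_N -> C) (F : 'I_N -> fn) K :
  (forall q, H (F q)) -> H K ->
  ip K (fun w => \sum_q c q *: F q w) = \sum_q (c q)^* * ip K (F q).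
Proof.
have [_ [_ [ipC _]]] := hs; move=> HF HK.
rewrite ipC ?ip_suml ?rmorph_sum //; last exact: hilbert_space_sum.
by apply: eq_bigr => q _; rewrite rmorphM /= -ipC.
Qed.

End HilbertSpace.

Section QuasiFree.
Variables (R : realType) (n m : nat).
Local Notation C := R[i].
Local Notation fn := ('rV[C]_n -> 'rV[C]_m).
Variables (Om : 'rV[C]_n -> Prop) (H : fn -> Prop) (ip : fn -> fn -> C).
Hypothesis qf : quasi_free Om H ip.

Lemma quasi_free_eval_bound z : Om z ->
  exists2 c : C, 0 < c & forall F, H F -> sqn (F z) <= c * ip F F.
Proof.
have [hs [_ [_ [eval_bound _]]]] := qf; have [_ [_ [_ [_ [ip_ge0 _]]]]] := hs.
move=> Omz; have [r [c [r_gt0 bound]]] := eval_bound z Omz.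
have zz_small : sqn (z - z) < r.
  by rewrite subrr /sqn big1 // => j _; rewrite mxE normr0 expr0n.
exists (`|c| + 1) => [|F HF]; first by rewrite ltr_wpDl.
have le_cp := bound z Omz zz_small F HF.
have cp_ge0 := le_trans (sqn_ge0 _) le_cp.
apply: le_trans le_cp _; rewrite -(ger0_norm cp_ge0) normrM (ger0_norm (ip_ge0 F HF)).
by rewrite ler_wpM2r ?ip_ge0 ?lerDl.
Qed.

Lemma modspan_mem_fst f g a b : (forall i, H (f i)) -> modspan Om f g a b -> H a.
Proof.
have [hs [_ [_ [_ [mod_action _]]]]] := qf.
move=> Hf [N [c [phi [idx [Aphi [-> _]]]]]].
have -> : (fun z => \sum_q (c q * phi q z) *: f (idx q) z) =
    (fun z => \sum_q c q *: (fun z => phi q z *: f (idx q) z) z).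
  by apply: functional_extensionality => z; apply: eq_bigr => q _; rewrite scalerA.
by apply: (hilbert_space_sum hs) => q; exact: (mod_action _ (Aphi q) _ (Hf _)).1.
Qed.

End QuasiFree.

Lemma modspan_sym (R : realType) (n m : nat) (Om : 'rV[R[i]]_n -> Prop) f g a b :
  modspan (m := m) Om f g a b -> modspan Om g f b a.
Proof. by move=> [N [c [phi [idx [Aphi [ea eb]]]]]]; exists N, c, phi, idx. Qed.

Section AdjointValue.
Variables (R : realType) (n m : nat).
Local Notation C := R[i].
Local Notation fn := ('rV[C]_n -> 'rV[C]_m).
Variables (Om : 'rV[C]_n -> Prop) (H H' : fn -> Prop) (ip ip' : fn -> fn -> C).
Variables (f g : 'I_m -> fn).
Hypotheses (hs : hilbert_space Om H ip) (hs' : hilbert_space Om H' ip').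

Lemma adjoint_value_sum N (c : 'I_N -> C) (h y : 'I_N -> fn) :
  (forall q, adjoint_value Om H H' ip ip' f g (h q) (y q)) ->
  adjoint_value Om H H' ip ip' f g
    (fun w => \sum_q c q *: h q w) (fun w => \sum_q c q *: y q w).
Proof.
move=> hy; have Hh q := (hy q).1; have Hy q := (hy q).2.1.
split; first exact: (hilbert_space_sum hs').
split; first exact: (hilbert_space_sum hs).
move=> x u xu; have [Hx [Hu _]] := xu.
rewrite (ip_sumr hs') // (ip_sumr hs) //.
by apply: eq_bigr => q _; have [_ [_ /(_ x u xu) ->]] := hy q.
Qed.

End AdjointValue.

Section DeltaGraph.
Variables (R : realType) (n m : nat).
Local Notation C := R[i].
Local Notation fn := ('rV[C]_n -> 'rV[C]_m).
Variables (Om : 'rV[C]_n -> Prop) (H H' : fn -> Prop) (ip ip' : fn -> fn -> C).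
Variables (f g : 'I_m -> fn).
Hypotheses (qf : quasi_free Om H ip) (qf' : quasi_free Om H' ip').
Hypotheses (Hf : forall i, H (f i)) (Hg : forall i, H' (g i)).

Lemma delta_graph_approx_at z x u : Om z -> delta_graph Om H H' ip ip' f g x u ->
  forall e : C, 0 < e -> exists a b,
    modspan Om f g a b /\ sqn (x z - a z) <= e /\ sqn (u z - b z) <= e.
Proof.
move=> Omz [Hx [Hu approx]] e e_gt0.
have [c c_gt0 eval_x] := quasi_free_eval_bound qf Omz.
have [c' c'_gt0 eval_u] := quasi_free_eval_bound qf' Omz.
have cc'_gt0 : 0 < c + c' by rewrite addr_gt0.
have [a [b [ab_span ab_close]]] := approx _ (divr_gt0 e_gt0 cc'_gt0).
have [hs hs'] := (qf.1, qf'.1).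
have Hxa := hilbert_space_sub hs Hx (modspan_mem_fst qf Hf ab_span).
have Hub := hilbert_space_sub hs' Hu (modspan_mem_fst qf' Hg (modspan_sym ab_span)).
have [[_ [_ [_ [_ [ip_ge0 _]]]]] [_ [_ [_ [_ [ip'_ge0 _]]]]]] := (hs, hs').
have scale_le (s d : C) : s <= c + c' -> 0 <= d -> d < e / (c + c') -> s * d <= e.
  move=> s_le d_ge0 d_lt; apply: le_trans (ler_wpM2r d_ge0 s_le) _.
  by rewrite mulrC -ler_pdivlMr // ltW.
exists a, b; split=> //; split.
- apply: le_trans (eval_x _ Hxa) (scale_le _ _ _ (ip_ge0 _ Hxa) _).
    by rewrite lerDl ltW.
  by apply: le_lt_trans ab_close; rewrite lerDl ip'_ge0.
- apply: le_trans (eval_u _ Hub) (scale_le _ _ _ (ip'_ge0 _ Hub) _).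
    by rewrite lerDr ltW.
  by apply: le_lt_trans ab_close; rewrite lerDr ip_ge0.
Qed.

Lemma modspan_dotl2 (X : 'M[C]_m) z i a b :
  (forall i l, dotl2 (\sum_j X i j *: f j z) (f l z) = dotl2 (g i z) (g l z)) ->
  modspan Om f g a b -> dotl2 (b z) (g i z) = dotl2 (a z) (\sum_j X i j *: f j z).
Proof.
move=> hX [N [c [phi [idx [_ [-> ->]]]]]].
rewrite !dotl2_suml; apply: eq_bigr => q _; congr (_ * _).
by rewrite dotl2C -hX -dotl2C.
Qed.

Lemma delta_graph_dotl2 (X : 'M[C]_m) z i x u : Om z ->
  (forall i l, dotl2 (\sum_j X i j *: f j z) (f l z) = dotl2 (g i z) (g l z)) ->
  delta_graph Om H H' ip ip' f g x u ->
  dotl2 (u z) (g i z) = dotl2 (x z) (\sum_j X i j *: f j z).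
Proof.
move=> Omz hX xu; set w := \sum_j X i j *: f j z.
apply/eqP; rewrite -subr_eq0; apply/eqP; apply: normr_small_eq0 => e e_gt0.
have e2_gt0 : 0 < e / 2%:R by rewrite divr_gt0 ?ltr0Sn.
have [d1 d1_gt0 small_g] := dotl2_small (g i z) e2_gt0.
have [d2 d2_gt0 small_w] := dotl2_small w e2_gt0.
have [d d_gt0 [d_le1 d_le2]] : exists2 d : C, 0 < d & d <= d1 /\ d <= d2.
  have [d12|d21] := real_leP (gtr0_real d1_gt0) (gtr0_real d2_gt0).
  - by exists d1; rewrite ?lexx.
  - by exists d2; rewrite ?lexx ?(ltW d21).
have [a [b [ab_span [xa_small ub_small]]]] := delta_graph_approx_at Omz xu d_gt0.
have -> : dotl2 (u z) (g i z) - dotl2 (x z) w =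
    dotl2 (u z - b z) (g i z) - dotl2 (x z - a z) w.
  by rewrite !dotl2Bl (modspan_dotl2 i hX ab_span) opprB addrA subrK.
apply: le_trans (ler_normB _ _) _; rewrite [e]splitr.
by apply: lerD; [apply: small_g; apply: le_trans d_le1 | apply: small_w; apply: le_trans d_le2].
Qed.

Lemma adjoint_value_kernel (k k' : 'I_m -> 'rV[C]_n -> fn) (X : 'M[C]_m) z i :
  kernel_functions Om H ip f k -> kernel_functions Om H' ip' g k' -> Om z ->
  (forall i l, dotl2 (\sum_j X i j *: f j z) (f l z) = dotl2 (g i z) (g l z)) ->
  adjoint_value Om H H' ip ip' f g (k' i z) (fun w => \sum_j X i j *: k j z w).
Proof.
move=> kf kf' Omz hX; have Hk j : H (k j z) := (kf j z Omz).1.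
split; first exact: (kf' i z Omz).1.
split; first exact: (hilbert_space_sum qf.1).
move=> x u xu; have [Hx [Hu _]] := xu.
rewrite (kf' i z Omz).2 // (ip_sumr qf.1) //.
under eq_bigr => j _ do rewrite (kf j z Omz).2 //.
by rewrite -dotl2_sumr (delta_graph_dotl2 i Omz hX xu).
Qed.

End DeltaGraph.

Unset Implicit Arguments.

Theorem lemma3 (R : realType) (n m : nat) (Om : 'rV[R[i]]_n -> Prop)
  (H H' : ('rV[R[i]]_n -> 'rV[R[i]]_m) -> Prop)
  (ip ip' : ('rV[R[i]]_n -> 'rV[R[i]]_m) -> ('rV[R[i]]_n -> 'rV[R[i]]_m) -> R[i])
  (f g : 'I_m -> 'rV[R[i]]_n -> 'rV[R[i]]_m)
  (k k' : 'I_m -> 'rV[R[i]]_n -> 'rV[R[i]]_n -> 'rV[R[i]]_m)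
  (X : 'rV[R[i]]_n -> 'M[R[i]]_m) :
  (0 < m)%N ->
  bounded_domain Om ->
  quasi_free Om H ip -> quasi_free Om H' ip' ->
  generating_set Om H ip f -> generating_set Om H' ip' g ->
  kernel_functions Om H ip f k -> kernel_functions Om H' ip' g k' ->
  (forall z, Om z -> forall i l : 'I_m,
     dotl2 (\sum_j X z i j *: f j z) (f l z) = dotl2 (g i z) (g l z)) ->
  (forall (N : nat) (c : 'I_N -> R[i]) (zs : 'I_N -> 'rV[R[i]]_n) (idx : 'I_N -> 'I_m),
     (forall q, Om (zs q)) ->
     in_adjoint_domain Om H H' ip ip' f g
       (fun w => \sum_q c q *: k' (idx q) (zs q) w)) /\
  (forall z (i : 'I_m), Om z ->
     adjoint_value Om H H' ip ip' f g (k' i z) (fun w => \sum_j X z i j *: k j z w)).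
Proof.
move=> _ _ qf qf' [Hf _] [Hg _] kf kf' hX.
have kernel_adjoint z i (Omz : Om z) :=
  adjoint_value_kernel qf qf' Hf Hg i kf kf' Omz (hX z Omz).
split=> [N c zs idx Omzs | z i Omz]; last exact: kernel_adjoint.
exists (fun w => \sum_q c q *: (fun w => \sum_j X (zs q) (idx q) j *: k j (zs q) w) w).
by apply: (adjoint_value_sum qf.1 qf'.1) => q; apply: kernel_adjoint.
Qed.
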